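(* For $a,b\in\mathbb{C}\setminus\{0\}$ let $$f_{a,b}(z)=\frac{z^3+az^2+b}{-\overline{b}z^3-\overline{a}z+1}.$$ If $c,d\in\mathbb{R}\setminus\{0\}$, then $f_{c,di}$ is conjugate, via a conformal map of $\mathbb{C}_\infty$ that is either orientation preserving or orientation reversing, to a map $f_{a,bi}$ of the same form with $a,b\in\mathbb{R}$, $a\ge0$ and $b\ge0$. *)

From HB Require Import structures.
From mathcomp Require Import all_boot all_order all_algebra.
From mathcomp Require Import complex.
Set Implicit Arguments. Unset Strict Implicit. Unset Printing Implicit Defensive.
Import Order.TTheory GRing.Theory Num.Theory.
Local Open Scope ring_scope.
Local Open Scope complex_scope.

(* Complex numbers: R[i] over a real closed field R (R = the reals in the paper). *)

(* The extended complex plane C_oo = C u {oo}; None is the point at infinity. *)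
Definition sphere (R : rcfType) := option R[i].

(* Evaluation on C_oo of the rational function P/Q (Q <> 0), after cancelling
   the common factor gcd(P,Q), so that it is the genuine rational map. *)
Definition rat_eval (R : rcfType) (P Q : {poly R[i]}) (z : sphere R) : sphere R :=
  let g := gcdp P Q in
  let P' := P %/ g in
  let Q' := Q %/ g in
  match z with
  | Some w => if Q'.[w] != 0 then Some (P'.[w] / Q'.[w]) else None
  | None => if (size Q' < size P')%N then None
            else if size P' == size Q' then Some (lead_coef P' / lead_coef Q')
            else Some 0
  end.

Definition fnum (R : rcfType) (a b : R[i]) : {poly R[i]} :=
  'X^3 + a *: 'X^2 + b%:P.
Definition fden (R : rcfType) (a b : R[i]) : {poly R[i]} :=
  (- conjc b) *: 'X^3 - (conjc a) *: 'X + 1.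
Definition f_ab (R : rcfType) (a b : R[i]) : sphere R -> sphere R :=
  rat_eval (fnum a b) (fden a b).

(* Orientation preserving conformal automorphisms of C_oo: Moebius maps
   z |-> (al z + be)/(ga z + de) with al de - be ga <> 0. *)
Definition mobius (R : rcfType) (al be ga de : R[i]) : sphere R -> sphere R :=
  rat_eval (al *: 'X + be%:P) (ga *: 'X + de%:P).

Definition is_mobius (R : rcfType) (phi : sphere R -> sphere R) : Prop :=
  exists al be ga de : R[i], al * de - be * ga != 0 /\ phi =1 mobius al be ga de.

Definition sconj (R : rcfType) (z : sphere R) : sphere R := omap (@conjc R) z.

(* Orientation reversing conformal automorphisms: Moebius composed with conjugation. *)
Definition is_antimobius (R : rcfType) (phi : sphere R -> sphere R) : Prop :=
  exists al be ga de : R[i], al * de - be * ga != 0 /\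
    phi =1 (mobius al be ga de) \o (@sconj R).

From HB Require Import structures.
From mathcomp Require Import all_boot all_order all_algebra.
From mathcomp Require Import complex.
From mathcomp Require Import ring.
Import Order.TTheory GRing.Theory Num.Theory.
Local Open Scope ring_scope.
Local Open Scope complex_scope.

(* The two symmetries of the family are f_{-a,-b}(-z) = -f_{a,b}(z) and
   conj (f_{a,b}(z)) = f_{conj a, conj b}(conj z).  For a = c real and b = d i
   purely imaginary, z |-> -z changes the signs of both c and d, while z |-> conj z
   changes the sign of d only; so id, z |-> -z, z |-> conj z and z |-> - conj z
   reach c, d >= 0 from each of the four sign patterns. *)

Section RationalMaps.
Variable R : rcfType.
Implicit Types (P Q u v h : {poly R[i]}) (z : sphere R).

Definition frac_eval u v z : sphere R :=
  match z with
  | Some w => if v.[w] != 0 then Some (u.[w] / v.[w]) else None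
  | None => if (size v < size u)%N then None
            else if size u == size v then Some (lead_coef u / lead_coef v)
            else Some 0
  end.

Lemma rat_evalE P Q z :
  rat_eval P Q z = frac_eval (P %/ gcdp P Q) (Q %/ gcdp P Q) z.
Proof. by []. Qed.

Lemma frac_evalZ (k : R[i]) u v z :
  k != 0 -> frac_eval (k *: u) (k *: v) z = frac_eval u v z.
Proof.
move=> k0; case: z => [w|] /=.
  rewrite !hornerZ mulf_eq0 negb_or k0 /=.
  by case: ifP => // _; rewrite invfM mulrACA divff // mul1r.
by rewrite !size_scale // !lead_coefZ invfM mulrACA divff // mul1r.
Qed.

Lemma rat_eval_coprime u v h z : h != 0 -> coprimep u v ->
  rat_eval (u * h) (v * h) z = frac_eval u v z.
Proof.
move=> h0 cop_uv; rewrite rat_evalE.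
set g := gcdp _ _.
have : g %= h.
  by rewrite -(eqp_ltrans (mulp_gcdl u v h)) -{2}(mul1r h) eqp_mul2r // gcdp_eqp1.
case/eqpP => -[k1 k2] /= /andP[k1_neq0 k2_neq0] eq_g.
have k_neq0 : k1 / k2 != 0 by rewrite mulf_neq0 ?invr_eq0.
have def_h : h = (k1 / k2) *: g by rewrite mulrC -scalerA eq_g scalerA mulVf ?scale1r.
have g_neq0 : g != 0 by apply: contra_neq h0 => g0; rewrite def_h g0 scaler0.
by rewrite def_h -!scalerAr !divpZl !mulpK // frac_evalZ.
Qed.

(* Both symmetries act on rational maps through a (twisted) multiplicative map
   of polynomials; since such a map preserves coprimality, it commutes with the
   cancellation of the gcd performed by [rat_eval]. *)
Section Transport.
Variables (F G : {poly R[i]} -> {poly R[i]}) (sigma tau : sphere R -> sphere R).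
Hypothesis FM : forall p q, F (p * q) = F p * G q.
Hypothesis GM : forall p q, G (p * q) = G p * G q.
Hypothesis G_neq0 : forall p, p != 0 -> G p != 0.
Hypothesis coprimep_FG : forall u v, coprimep u v -> coprimep (F u) (G v).
Hypothesis sigma_frac_eval :
  forall u v z, sigma (frac_eval u v z) = frac_eval (F u) (G v) (tau z).

Lemma rat_eval_transport P Q z : Q != 0 ->
  sigma (rat_eval P Q z) = rat_eval (F P) (G Q) (tau z).
Proof.
move=> Q_neq0; rewrite rat_evalE sigma_frac_eval.
set g := gcdp P Q.
have g_neq0 : g != 0 by rewrite gcdp_eq0 negb_and Q_neq0 orbT.
have cop : coprimep (P %/ g) (Q %/ g) by rewrite coprimep_div_gcd ?Q_neq0 ?orbT.
have -> : F P = F (P %/ g) * G g by rewrite -FM divpK ?dvdp_gcdl.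
have -> : G Q = G (Q %/ g) * G g by rewrite -GM divpK ?dvdp_gcdr.
by rewrite rat_eval_coprime ?G_neq0 ?coprimep_FG.
Qed.

End Transport.

Definition compN p : {poly R[i]} := p \Po - 'X.
Definition conjp p : {poly R[i]} := map_poly (@conjc R) p.
Definition sopp z : sphere R := omap -%R z.

Lemma compN_eq0 p : (compN p == 0) = (p == 0).
Proof. by rewrite -!size_poly_eq0 size_comp_poly2 // size_polyN size_polyX. Qed.

Lemma coprimep_compN u v : coprimep u v -> coprimep (- compN u) (compN v).
Proof.
case/Bezout_eq1_coprimepP => -[p q] /= Bezout_pq.
apply/Bezout_eq1_coprimepP; exists (- compN p, compN q) => /=.
by rewrite mulrNN /compN -!comp_polyM -comp_polyD Bezout_pq comp_polyC.
Qed.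

Lemma sopp_frac_eval u v z :
  sopp (frac_eval u v z) = frac_eval (- compN u) (compN v) (sopp z).
Proof.
have size_compN p : size (compN p) = size p.
  by rewrite size_comp_poly2 // size_polyN size_polyX.
case: z => [w|] /=.
  rewrite /compN hornerN !horner_comp hornerN hornerX opprK.
  by case: ifP => //= _; rewrite mulNr.
rewrite size_polyN !size_compN.
case: ifP => // _; case: ifP => /= [/eqP size_uv|_]; last by rewrite oppr0.
rewrite lead_coefN !lead_coef_comp ?size_polyN ?size_polyX // lead_coefN lead_coefX size_uv.
have sg_neq0 : (-1 : R[i]) ^+ (size v).-1 != 0 by rewrite expf_neq0 ?oppr_eq0 ?oner_eq0.
by rewrite mulNr invfM mulrACA divff // mulr1.
Qed.

Lemma sconj_frac_eval u v z :
  sconj (frac_eval u v z) = frac_eval (conjp u) (conjp v) (sconj z).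
Proof.
case: z => [w|] /=.
  rewrite /conjp !horner_map conjc_eq0.
  by case: ifP => //= _; rewrite fmorph_div.
rewrite /conjp !size_map_poly !lead_coef_map.
by case: ifP => // _; case: ifP => _; congr Some; rewrite ?fmorph_div ?conjc0.
Qed.

Lemma sopp_rat_eval P Q z : Q != 0 ->
  sopp (rat_eval P Q z) = rat_eval (- compN P) (compN Q) (sopp z).
Proof.
apply: (@rat_eval_transport (fun p => - compN p) compN).
- by move=> p q; rewrite mulNr /compN comp_polyM.
- by move=> p q; rewrite /compN comp_polyM.
- by move=> p; rewrite compN_eq0.
- exact: coprimep_compN.
- exact: sopp_frac_eval.
Qed.

Lemma sconj_rat_eval P Q z : Q != 0 ->
  sconj (rat_eval P Q z) = rat_eval (conjp P) (conjp Q) (sconj z).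
Proof.
apply: (@rat_eval_transport conjp conjp).
- by move=> p q; rewrite /conjp rmorphM.
- by move=> p q; rewrite /conjp rmorphM.
- by move=> p; rewrite map_poly_eq0.
- by move=> u v; rewrite coprimep_map.
- exact: sconj_frac_eval.
Qed.

Lemma mobius_scale (k : R[i]) : k != 0 -> mobius k 0 0 1 =1 omap ( *%R k).
Proof.
move=> k_neq0 z; rewrite /mobius scale0r add0r addr0 -[k *: 'X]mulr1 -[1%:P]mulr1.
rewrite rat_eval_coprime ?oner_eq0 ?coprimep1 //.
case: z => [w|] /=; first by rewrite hornerC oner_eq0 hornerZ hornerX divr1.
by rewrite size_polyC oner_eq0 size_scale // size_polyX.
Qed.

Lemma is_mobius_scale (k : R[i]) (phi : sphere R -> sphere R) :
  k != 0 -> phi =1 omap ( *%R k) -> is_mobius phi.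
Proof.
move=> k_neq0 phiE; exists k, 0, 0, 1; rewrite mulr1 mulr0 subr0; split=> // z.
by rewrite phiE mobius_scale.
Qed.

Lemma is_antimobius_scale (k : R[i]) (phi : sphere R -> sphere R) :
  k != 0 -> phi =1 omap ( *%R k) \o @sconj R -> is_antimobius phi.
Proof.
move=> k_neq0 phiE; exists k, 0, 0, 1; rewrite mulr1 mulr0 subr0; split=> // z.
by rewrite phiE /= mobius_scale.
Qed.

Lemma is_mobius_id : is_mobius (@id (sphere R)).
Proof. by apply: (@is_mobius_scale 1) => [|[w|]] //=; rewrite ?oner_eq0 ?mul1r. Qed.

Lemma is_mobius_sopp : is_mobius sopp.
Proof.
by apply: (@is_mobius_scale (-1)) => [|[w|]] //=; rewrite ?oppr_eq0 ?oner_eq0 ?mulN1r.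
Qed.

Lemma is_antimobius_sconj : is_antimobius (@sconj R).
Proof. by apply: (@is_antimobius_scale 1) => [|[w|]] //=; rewrite ?oner_eq0 ?mul1r. Qed.

Lemma is_antimobius_sopp_sconj : is_antimobius (sopp \o @sconj R).
Proof.
by apply: (@is_antimobius_scale (-1)) => [|[w|]] //=; rewrite ?oppr_eq0 ?oner_eq0 ?mulN1r.
Qed.

End RationalMaps.

Arguments compN {R} p.
Arguments conjp {R} p.
Arguments sopp {R} z.

Section Family.
Variable R : rcfType.
Implicit Types (a b : R[i]) (z : sphere R).

Lemma fnumN a b : fnum (- a) (- b) = - compN (fnum a b).
Proof.
rewrite /fnum /compN !comp_polyD !comp_polyZ !comp_Xn_poly comp_polyC.
by rewrite -!mul_polyC !polyCN; ring.
Qed.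

Lemma fdenN a b : fden (- a) (- b) = compN (fden a b).
Proof.
rewrite /fden /compN comp_polyD comp_polyB !comp_polyZ comp_Xn_poly comp_polyX.
by rewrite comp_polyC !rmorphN -!mul_polyC !polyCN; ring.
Qed.

Lemma conjp_fnum a b : conjp (fnum a b) = fnum a^* b^*.
Proof. by rewrite /conjp /fnum !rmorphD /= !map_polyZ !map_polyXn map_polyC. Qed.

Lemma conjp_fden a b : conjp (fden a b) = fden a^* b^*.
Proof.
by rewrite /conjp /fden !rmorphD !rmorphN /= !map_polyZ map_polyXn map_polyX rmorph1 rmorphN.
Qed.

Lemma fden_neq0 a b : fden a b != 0.
Proof.
apply: contra_neq (@oner_neq0 R[i]) => /(congr1 (horner^~ 0)).
by rewrite /fden !(hornerD, hornerN, hornerZ, hornerXn, hornerX, hornerC) expr0n /= !mulr0 subr0 add0r.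
Qed.

Lemma sopp_f_ab a b z : sopp (f_ab a b z) = f_ab (- a) (- b) (sopp z).
Proof. by rewrite /f_ab sopp_rat_eval ?fden_neq0 // fnumN fdenN. Qed.

Lemma sconj_f_ab a b z : sconj (f_ab a b z) = f_ab a^* b^* (sconj z).
Proof. by rewrite /f_ab sconj_rat_eval ?fden_neq0 // conjp_fnum conjp_fden. Qed.

Lemma sopp_f_ab_real_imag (c d : R) z :
  sopp (f_ab c%:C (Complex 0 d) z) = f_ab (- c)%:C (Complex 0 (- d)) (sopp z).
Proof.
have -> : Complex 0 (- d) = - Complex 0 d by apply/eqP; rewrite eq_complex /= oppr0 !eqxx.
by rewrite sopp_f_ab rmorphN.
Qed.

Lemma sconj_f_ab_real_imag (c d : R) z :
  sconj (f_ab c%:C (Complex 0 d) z) = f_ab c%:C (Complex 0 (- d)) (sconj z).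
Proof. by rewrite sconj_f_ab conjc_real; congr (f_ab _ _ _). Qed.

End Family.

Theorem mainTheorem7 (R : rcfType) (c d : R) (hc : c != 0) (hd : d != 0) :
  exists (a b : R), [/\ 0 <= a, 0 <= b, a != 0 & b != 0] /\
    exists phi : sphere R -> sphere R,
      (is_mobius phi \/ is_antimobius phi) /\
      forall z : sphere R,
        phi (f_ab c%:C (Complex 0 d) z) = f_ab a%:C (Complex 0 b) (phi z).
Proof.
exists `|c|, `|d|; split; first by rewrite !normr_ge0 !normr_eq0.
move: hc hd; rewrite !neq_lt => /orP[c_lt0|c_gt0] /orP[d_lt0|d_gt0];
  rewrite ?(ltr0_norm c_lt0) ?(gtr0_norm c_gt0) ?(ltr0_norm d_lt0) ?(gtr0_norm d_gt0).
- exists sopp; split; first by left; exact: is_mobius_sopp.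
  exact: sopp_f_ab_real_imag.
- exists (sopp \o @sconj R); split; first by right; exact: is_antimobius_sopp_sconj.
  by move=> z /=; rewrite sconj_f_ab_real_imag sopp_f_ab_real_imag opprK.
- exists (@sconj R); split; first by right; exact: is_antimobius_sconj.
  exact: sconj_f_ab_real_imag.
- by exists id; split; first by left; exact: is_mobius_id.
Qed.
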